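(* If $\mathsf K$ is a variety of $\tau$-algebras, then $\mathsf K^{\triangle}$ is a variety of infinitary clone $\tau$-algebras.
   Context: $\tau$ is a set of $\omega$-ary operation symbols disjoint from $\{q\}\cup\{e_i:i\in\omega\}$; a $\tau$-algebra is $\mathbf A=(A,f^{\mathbf A})_{f\in\tau}$ with $f^{\mathbf A}:A^\omega\to A$. A variety is a class closed under isomorphic copies, homomorphic images, subalgebras and arbitrary direct products. $\bar\tau$ is the type with nullary $e_i$ ($i\in\omega$), nullary $f$ for each $f\in\tau$, and $\omega$-ary $q$. An infinitary clone $\tau$-algebra is a $\bar\tau$-algebra satisfying (N1) $q(e_i,x_0,x_1,\dots)=x_i$; (N2) $q(x,e_0,e_1,\dots)=x$; (N3) $q(q(x,y_0,y_1,\dots),\boldsymbol z)=q(x,q(y_0,\boldsymbol z),q(y_1,\boldsymbol z),\dots)$ with $\boldsymbol z=(z_0,z_1,\dots)$. For a $\tau$-algebra $\mathbf A$, $\mathcal O^{(\omega)}_{\mathbf A}$ is the infinitary clone $\tau$-algebra whose universe is all functions $A^\omega\to A$, with $e_i(s)=s_i$, $q(g_0,g_1,\dots)(s)=g_0(g_1(s),g_2(s),\dots)$, constant $f$ interpreted as $f^{\mathbf A}$. For a class $\mathsf K$ of $\tau$-algebras, $\mathsf K^{\triangle}$ is the class of infinitary clone $\tau$-algebras isomorphic to a subalgebra of $\mathcal O^{(\omega)}_{\mathbf A}$ for some $\mathbf A\in\mathsf K$. *)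

Record signature := Signature { sym : Type; arity : sym -> Type }.

Record algebra (s : signature) := Algebra {
  carrier :> Type;
  op : forall o : sym s, (arity s o -> carrier) -> carrier }.
Arguments Algebra {s} carrier op.
Arguments carrier {s} a.
Arguments op {s} a o _.

Section General.
Variable s : signature.

Definition is_hom (A B : algebra s) (h : A -> B) : Prop :=
  forall (o : sym s) (a : arity s o -> A), h (op A o a) = op B o (fun i => h (a i)).

Definition isomorphic (A B : algebra s) : Prop :=
  exists (h : A -> B) (g : B -> A), is_hom A B h /\
    (forall x, g (h x) = x) /\ (forall y, h (g y) = y).

Definition hom_image (A B : algebra s) : Prop :=
  exists h : A -> B, is_hom A B h /\ forall y : B, exists x : A, h x = y.

Definition closed (A : algebra s) (P : A -> Prop) : Prop :=
  forall (o : sym s) (a : arity s o -> A), (forall i, P (a i)) -> P (op A o a).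

Definition subalg (A : algebra s) (P : A -> Prop) (HP : closed A P) : algebra s :=
  Algebra {x : A | P x}
    (fun o a => exist P (op A o (fun i => proj1_sig (a i)))
                        (HP o _ (fun i => proj2_sig (a i)))).

Definition prod_alg (I : Type) (A : I -> algebra s) : algebra s :=
  Algebra (forall i, A i) (fun o a => fun i => op (A i) o (fun j => a j i)).

Definition iso_sub (B A : algebra s) : Prop :=
  exists (P : A -> Prop) (HP : closed A P), isomorphic B (subalg A P HP).

Definition is_variety (K : algebra s -> Prop) : Prop :=
  (forall A B : algebra s, K A -> isomorphic A B -> K B) /\
  (forall A B : algebra s, K A -> hom_image A B -> K B) /\
  (forall (A : algebra s) (P : A -> Prop) (HP : closed A P), K A -> K (subalg A P HP)) /\
  (forall (I : Type) (A : I -> algebra s), (forall i, K (A i)) -> K (prod_alg I A)).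
End General.

Definition tau_sig (T : Type) : signature := Signature T (fun _ => nat).

(* bar tau: nullary e_i (i : nat), nullary f (f : T), omega-ary q;
   the sum type makes T disjoint from {q} and {e_i}. *)
Inductive barsym (T : Type) : Type :=
  | Esym : nat -> barsym T
  | Fsym : T -> barsym T
  | Qsym : barsym T.
Arguments Esym {T} _.
Arguments Fsym {T} _.
Arguments Qsym {T}.

Definition bar_arity (T : Type) (o : barsym T) : Type :=
  match o with Qsym => nat | _ => Empty_set end.

Definition bar_sig (T : Type) : signature := Signature (barsym T) (bar_arity T).

Section Clone.
Variable T : Type.
Variable B : algebra (bar_sig T).

Definition ce (i : nat) : B := op B (Esym i : sym (bar_sig T)) (fun z : Empty_set => match z with end).
(* q(x, y_0, y_1, ...) : argument 0 is x, argument n+1 is y_n *)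
Definition cq (x : B) (y : nat -> B) : B :=
  op B (Qsym : sym (bar_sig T)) (fun n => match n with 0 => x | S m => y m end).

Definition is_clone_alg : Prop :=
  (forall (i : nat) (x : nat -> B), cq (ce i) x = x i) /\
  (forall x : B, cq x ce = x) /\
  (forall (x : B) (y z : nat -> B), cq (cq x y) z = cq x (fun n => cq (y n) z)).
End Clone.

Definition Oomega (T : Type) (A : algebra (tau_sig T)) : algebra (bar_sig T) :=
  @Algebra (bar_sig T) ((nat -> A) -> A)
    (fun (o : barsym T) =>
       match o return (bar_arity T o -> ((nat -> A) -> A)) -> ((nat -> A) -> A) with
       | Esym i => fun _ s => s i
       | Fsym f => fun _ => op A (f : sym (tau_sig T))
       | Qsym => fun g s => g 0 (fun n => g (S n) s)
       end).

Definition triangle (T : Type) (K : algebra (tau_sig T) -> Prop) (B : algebra (bar_sig T)) : Prop :=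
  is_clone_alg T B /\ exists A : algebra (tau_sig T), K A /\ iso_sub (bar_sig T) B (Oomega T A).

(* Every bar-tau-algebra B has a tau-reduct: the tau-algebra on B with
   f(a_0, a_1, ...) := q(f, a_0, a_1, ...).  B lies in K^triangle iff B satisfies
   (N1)-(N3) and its reduct lies in K.  Indeed a clone algebra B embeds into
   O^(omega) of its own reduct via a |-> (s |-> q(a, s)), and conversely the reduct
   of a subalgebra of O^(omega)_A is a subalgebra of the power A^(A^omega).  Both
   conditions are preserved by H, S and P: (N1)-(N3) because they are identities,
   membership of the reduct in K because taking reducts commutes with homomorphic
   images, subalgebras and products. *)
From Stdlib Require Import FunctionalExtensionality ProofIrrelevance IndefiniteDescription.

Lemma empty_fun_eq (X : Type) (u v : Empty_set -> X) : u = v.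
Proof. apply functional_extensionality; intros []. Qed.

Lemma proj1_sig_inj (X : Type) (P : X -> Prop) (x y : {a | P a}) :
  proj1_sig x = proj1_sig y -> x = y.
Proof. destruct x, y; cbn; apply subset_eq_compat. Qed.

Section Homomorphisms.
Variable s : signature.

Lemma isomorphic_sym (A B : algebra s) : isomorphic s A B -> isomorphic s B A.
Proof.
  intros [h [g [Hh [Hgh Hhg]]]]. exists g, h. split; [|split; assumption].
  intros o b. rewrite <- (Hgh (op A o _)), Hh. f_equal. f_equal.
  apply functional_extensionality; intro i. symmetry. apply Hhg.
Qed.

Lemma is_hom_proj (I : Type) (A : I -> algebra s) (i : I) :
  is_hom s (prod_alg s I A) (A i) (fun x => x i).
Proof. intros o a. reflexivity. Qed.

Lemma is_hom_into_prod (I : Type) (B : algebra s) (A : I -> algebra s)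
    (h : B -> prod_alg s I A) :
  (forall i, is_hom s B (A i) (fun x => h x i)) -> is_hom s B (prod_alg s I A) h.
Proof.
  intros Hh o b. apply functional_extensionality_dep; intro i. apply Hh.
Qed.

Lemma is_hom_proj1_sig (A : algebra s) (P : A -> Prop) (HP : closed s A P) :
  is_hom s (subalg s A P HP) A (@proj1_sig _ _).
Proof. intros o a. reflexivity. Qed.

Lemma is_hom_into_subalg (B A : algebra s) (P : A -> Prop) (HP : closed s A P)
    (h : B -> subalg s A P HP) :
  is_hom s B A (fun x => proj1_sig (h x)) -> is_hom s B (subalg s A P HP) h.
Proof. intros Hh o b. apply proj1_sig_inj, Hh. Qed.

End Homomorphisms.

Section Reduct.
Variable T : Type.
Notation BA := (algebra (bar_sig T)).
Notation TA := (algebra (tau_sig T)).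

Definition cst (B : BA) (f : T) : B :=
  op B (Fsym f : sym (bar_sig T)) (fun z : Empty_set => match z with end).

Definition reduct (B : BA) : TA :=
  @Algebra (tau_sig T) (carrier B) (fun f a => cq T B (cst B f) a).

Lemma cq_op (B : BA) (a : nat -> B) :
  cq T B (a 0) (fun m => a (S m)) = op B (Qsym : sym (bar_sig T)) a.
Proof. unfold cq. f_equal. apply functional_extensionality; intros [|n]; reflexivity. Qed.

Section BarHom.
Variables B C : BA.
Variable h : B -> C.
Hypothesis Hh : is_hom (bar_sig T) B C h.

Lemma hom_ce i : h (ce T B i) = ce T C i.
Proof. unfold ce. rewrite Hh. f_equal. apply empty_fun_eq. Qed.

Lemma hom_cst f : h (cst B f) = cst C f.
Proof. unfold cst. rewrite Hh. f_equal. apply empty_fun_eq. Qed.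

Lemma hom_cq x y : h (cq T B x y) = cq T C (h x) (fun n => h (y n)).
Proof.
  unfold cq. rewrite Hh. f_equal. apply functional_extensionality; intros [|n]; reflexivity.
Qed.

Lemma is_hom_reduct : is_hom (tau_sig T) (reduct B) (reduct C) h.
Proof. intros f a. cbn. rewrite hom_cq, hom_cst. reflexivity. Qed.

Lemma clone_alg_hom_image :
  (forall y, exists x, h x = y) -> is_clone_alg T B -> is_clone_alg T C.
Proof.
  intros Hsurj [N1 [N2 N3]].
  destruct (functional_choice _ Hsurj) as [g hg].
  assert (lift : forall y : nat -> C, y = fun n => h (g (y n))).
  { intro y. apply functional_extensionality; intro n. symmetry. apply hg. }
  split; [|split].
  - intros i x. rewrite (lift x), <- (hom_ce i), <- hom_cq, N1. reflexivity.
  - intros x. rewrite <- (hg x) at 1.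
    rewrite (functional_extensionality (ce T C) _ (fun n => eq_sym (hom_ce n))).
    rewrite <- hom_cq, N2. apply hg.
  - intros x y z. rewrite <- (hg x), (lift y), (lift z), <- !hom_cq, N3, hom_cq.
    f_equal. apply functional_extensionality; intro n. apply hom_cq.
Qed.

End BarHom.

Lemma clone_alg_of_jointly_injective (I : Type) (B : BA) (C : I -> BA)
    (h : forall i, B -> C i) :
  (forall i, is_hom (bar_sig T) B (C i) (h i)) ->
  (forall x y, (forall i, h i x = h i y) -> x = y) ->
  (forall i, is_clone_alg T (C i)) -> is_clone_alg T B.
Proof.
  intros Hh Hinj HC. split; [|split].
  - intros n x. apply Hinj; intro i.
    rewrite (hom_cq _ _ _ (Hh i)), (hom_ce _ _ _ (Hh i)). apply (HC i).
  - intros x. apply Hinj; intro i. rewrite (hom_cq _ _ _ (Hh i)).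
    rewrite <- (proj1 (proj2 (HC i)) (h i x)) at 2. f_equal.
    apply functional_extensionality; intro n. apply (hom_ce _ _ _ (Hh i)).
  - intros x y z. apply Hinj; intro i.
    rewrite !(hom_cq _ _ _ (Hh i)), (proj2 (proj2 (HC i))). f_equal.
    apply functional_extensionality; intro n. symmetry. apply (hom_cq _ _ _ (Hh i)).
Qed.

Lemma clone_alg_subalg (B : BA) (P : B -> Prop) (HP : closed _ B P) :
  is_clone_alg T B -> is_clone_alg T (subalg _ B P HP).
Proof.
  intro HB. apply (clone_alg_of_jointly_injective unit (subalg _ B P HP) (fun _ => B)
           (fun _ => @proj1_sig _ _)).
  - intros _. apply is_hom_proj1_sig.
  - intros x y Hxy. apply proj1_sig_inj, (Hxy tt).
  - intros _. exact HB.
Qed.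

Lemma clone_alg_prod (I : Type) (B : I -> BA) :
  (forall i, is_clone_alg T (B i)) -> is_clone_alg T (prod_alg _ I B).
Proof.
  apply (clone_alg_of_jointly_injective I (prod_alg _ I B) B (fun i x => x i)).
  - apply is_hom_proj.
  - intros x y Hxy. apply functional_extensionality_dep, Hxy.
Qed.

Lemma closed_reduct (B : BA) (P : B -> Prop) :
  closed _ B P -> closed _ (reduct B) P.
Proof.
  intros HP f a Ha. apply HP. intros [|n]; [|apply Ha].
  apply HP. intros [].
Qed.

Lemma reduct_subalg (B : BA) (P : B -> Prop) (HP : closed _ B P) :
  isomorphic _ (subalg _ (reduct B) P (closed_reduct B P HP)) (reduct (subalg _ B P HP)).
Proof.
  apply isomorphic_sym. exists (fun x => x), (fun x => x). split; [|split; reflexivity].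
  apply is_hom_into_subalg, (is_hom_reduct _ _ _ (is_hom_proj1_sig _ _ _ HP)).
Qed.

Lemma reduct_prod (I : Type) (B : I -> BA) :
  isomorphic _ (prod_alg _ I (fun i => reduct (B i))) (reduct (prod_alg _ I B)).
Proof.
  apply isomorphic_sym. exists (fun x => x), (fun x => x). split; [|split; reflexivity].
  apply is_hom_into_prod; intro i. apply is_hom_reduct, is_hom_proj.
Qed.

Lemma reduct_Oomega (A : TA) :
  reduct (Oomega T A) = prod_alg _ (nat -> A) (fun _ => A).
Proof. reflexivity. Qed.

Section Embedding.
Variable B : BA.
Hypothesis HB : is_clone_alg T B.

Definition embed (a : B) : Oomega T (reduct B) := fun s => cq T B a s.

Lemma is_hom_embed : is_hom _ B (Oomega T (reduct B)) embed.
Proof.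
  destruct HB as [N1 [_ N3]]. intros [i|f|] a; apply functional_extensionality; intro s;
    unfold embed; cbn.
  - replace a with (fun z : Empty_set => match z with end : B) by apply empty_fun_eq.
    apply N1.
  - replace a with (fun z : Empty_set => match z with end : B) by apply empty_fun_eq.
    reflexivity.
  - rewrite <- cq_op. apply N3.
Qed.

Definition in_image (x : Oomega T (reduct B)) : Prop := exists a, embed a = x.

Lemma embed_eval x : in_image x -> embed (x (ce T B)) = x.
Proof. intros [a <-]. unfold embed at 2. rewrite (proj1 (proj2 HB)). reflexivity. Qed.

Lemma closed_in_image : closed _ (Oomega T (reduct B)) in_image.
Proof.
  intros o x Hx. exists (op B o (fun i => x i (ce T B))).
  rewrite is_hom_embed. f_equal. apply functional_extensionality; intro i.
  apply embed_eval, Hx.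
Qed.

Lemma iso_sub_Oomega_reduct : iso_sub _ B (Oomega T (reduct B)).
Proof.
  exists in_image, closed_in_image.
  exists (fun a => exist in_image (embed a) (ex_intro _ a eq_refl)).
  exists (fun y => proj1_sig y (ce T B)).
  split; [|split].
  - apply is_hom_into_subalg, is_hom_embed.
  - intros x. apply (proj1 (proj2 HB)).
  - intros [y Hy]. apply proj1_sig_inj, embed_eval, Hy.
Qed.

End Embedding.

Section Variety.
Variable K : TA -> Prop.
Hypothesis HK : is_variety (tau_sig T) K.

Lemma triangle_iff (B : BA) : triangle T K B <-> is_clone_alg T B /\ K (reduct B).
Proof.
  destruct HK as [KI [_ [KS KP]]]. split.
  - intros [HB [A [KA [P [HP Hiso]]]]]. split; [exact HB|].
    assert (Ksub : K (reduct (subalg _ (Oomega T A) P HP))).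
    { eapply KI; [|apply reduct_subalg]. apply KS. rewrite reduct_Oomega. apply KP; auto. }
    eapply KI; [exact Ksub|].
    apply isomorphic_sym. destruct Hiso as [h [g [Hh Hinv]]].
    exists h, g. split; [apply is_hom_reduct, Hh | exact Hinv].
  - intros [HB KB]. split; [exact HB|]. exists (reduct B).
    split; [exact KB | apply iso_sub_Oomega_reduct, HB].
Qed.

Lemma triangle_hom_image (B C : BA) :
  triangle T K B -> hom_image _ B C -> triangle T K C.
Proof.
  rewrite !triangle_iff. intros [HB KB] [h [Hh Hsurj]]. split.
  - exact (clone_alg_hom_image B C h Hh Hsurj HB).
  - apply (proj1 (proj2 HK) _ _ KB). exists h. split; [apply is_hom_reduct, Hh | exact Hsurj].
Qed.

Lemma triangle_subalg (B : BA) (P : B -> Prop) (HP : closed _ B P) :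
  triangle T K B -> triangle T K (subalg _ B P HP).
Proof.
  rewrite !triangle_iff. intros [HB KB]. split; [apply clone_alg_subalg, HB|].
  destruct HK as [KI [_ [KS _]]]. eapply KI; [apply KS, KB | apply reduct_subalg].
Qed.

Lemma triangle_prod (I : Type) (B : I -> BA) :
  (forall i, triangle T K (B i)) -> triangle T K (prod_alg _ I B).
Proof.
  setoid_rewrite triangle_iff. intro HB. split; [apply clone_alg_prod, HB|].
  destruct HK as [KI [_ [_ KP]]]. eapply KI; [apply KP, HB | apply reduct_prod].
Qed.

End Variety.
End Reduct.

Theorem theorem5p2 (T : Type) (K : algebra (tau_sig T) -> Prop) :
  is_variety (tau_sig T) K ->
  is_variety (bar_sig T) (triangle T K) /\
  (forall B, triangle T K B -> is_clone_alg T B).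
Proof.
  intro HK. split; [split; [|split; [|split]]|].
  - intros A B HA [h [g [Hh [_ Hhg]]]]. apply (triangle_hom_image T K HK A B HA).
    exists h. split; [exact Hh|]. intro y. exists (g y). apply Hhg.
  - apply (triangle_hom_image T K HK).
  - intros A P HP. apply (triangle_subalg T K HK).
  - apply (triangle_prod T K HK).
  - intros B HB. apply (triangle_iff T K HK B) in HB. apply HB.
Qed.
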